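(* Let $R$ be a commutative associative ring with unity, let $\operatorname{T}=\{x_1,x_2,\ldots\}$ be a trivial quandle with more than one element, $A=R[\operatorname{T}]$, $L=A^{(-)}$, and for $k\ge1$ let $L^k$ be the subalgebra of $L$ generated by products of $k$ elements of $L$. Then: (1) $L^2=L^3$, and this algebra has basis $\{x_1-x_2,\,x_2-x_3,\,\ldots\}$; in particular, if $\operatorname{T}$ has $n$ elements, then $L^2$ has rank $n-1$. (2) $(L^2)^2=0$, i.e. $L$ is metabelian. (3) If moreover $1/2\in R$ and $J=A^{(+)}$, then $J^2=J$.
   Context: A trivial quandle is a set $\operatorname{T}$ with operation $xy=x$ for all $x,y$. The quandle ring $R[\operatorname{T}]$ is the free $R$-module with basis $\operatorname{T}$, with multiplication $\big(\sum_i\alpha_i x_i\big)\big(\sum_j\beta_j x_j\big)=\sum_{i,j}\alpha_i\beta_j (x_ix_j)$. For an $R$-algebra $A$, $A^{(-)}$ is the same $R$-module with multiplication $x\circ y=xy-yx$, and (when $1/2\in R$) $A^{(+)}$ is the same $R$-module with multiplication $x\odot y=\tfrac12(xy+yx)$. For an algebra $B$, $B^2$ denotes the subalgebra generated by all products of two elements of $B$. *)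

From HB Require Import structures.
From mathcomp Require Import all_boot all_order all_algebra.
From mathcomp Require Import finmap.
From mathcomp.multinomials Require Export monalg.
Set Implicit Arguments. Unset Strict Implicit. Unset Printing Implicit Defensive.
Import Order.TTheory GRing.Theory Num.Theory.
Local Open Scope ring_scope.

(* Free R-module with basis nat: finitely supported functions nat -> R.
   The generator x_i (paper's x_{i+1}, 0-based) is << i >>. *)
Notation FM R := {malg R[nat]}.

(* The underlying set of the quandle T = {x_0, x_1, ...}: either the first n
   indices (N = Some n) or all of nat (N = None, countably infinite T). *)
Definition Tset (N : option nat) : pred nat :=
  fun i => if N is Some n then (i < n)%N else true.

(* Elements of the quandle ring R[T]: finitely supported with support in T. *)
Definition inA (R : comNzRingType) (N : option nat) (f : FM R) : Prop :=
  {subset msupp f <= Tset N}.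

Definition qmul (R : comNzRingType) (op : nat -> nat -> nat) (f g : FM R) : FM R :=
  \sum_(x <- msupp f) \sum_(y <- msupp g) (f@_x * g@_y) *: << op x y >>.

Definition triv_op (x y : nat) : nat := x.

Definition lie_mul (R : comNzRingType) (f g : FM R) : FM R :=
  qmul triv_op f g - qmul triv_op g f.

(* A^(+):  u . v = (1/2)(uv + vu), where h is the inverse of 2 in R. *)
Definition jor_mul (R : comNzRingType) (h : R) (f g : FM R) : FM R :=
  h *: (qmul triv_op f g + qmul triv_op g f).

Inductive prods (R : comNzRingType) (mul : FM R -> FM R -> FM R) (S : FM R -> Prop)
  : nat -> FM R -> Prop :=
| prods1 a : S a -> prods mul S 1 a
| prodsM i j a b : prods mul S i a -> prods mul S j b -> prods mul S (i + j) (mul a b).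

Inductive gen (R : comNzRingType) (mul : FM R -> FM R -> FM R) (G : FM R -> Prop)
  : FM R -> Prop :=
| gen_in a : G a -> gen mul G a
| gen0 : gen mul G 0
| genD a b : gen mul G a -> gen mul G b -> gen mul G (a + b)
| genZ (c : R) a : gen mul G a -> gen mul G (c *: a)
| genM a b : gen mul G a -> gen mul G b -> gen mul G (mul a b).

Definition alg_pow (R : comNzRingType) (mul : FM R -> FM R -> FM R) (B : FM R -> Prop)
  (k : nat) : FM R -> Prop := gen mul (prods mul B k).

Definition is_basis (R : comNzRingType) (S : FM R -> Prop) (J : pred nat)
    (b : nat -> FM R) : Prop :=
  [/\ forall i, J i -> S (b i),
      (forall f, S f -> exists (s : seq nat) (c : nat -> R),
          all J s /\ f = \sum_(i <- s) c i *: b i)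
    & (forall (s : seq nat) (c : nat -> R), uniq s -> all J s ->
          \sum_(i <- s) c i *: b i = 0 -> forall i, i \in s -> c i = 0)].

Definition diffb (R : comNzRingType) (i : nat) : FM R := << i >> - << i.+1 >>.

From HB Require Import structures.
From mathcomp Require Import all_boot all_order all_algebra.
From mathcomp Require Import finmap.
From mathcomp.multinomials Require Import monalg.
Set Implicit Arguments. Unset Strict Implicit. Unset Printing Implicit Defensive.
Import GRing.Theory.
Local Open Scope ring_scope.

(* With the trivial quandle the product is u v = aug(v) u, where aug is the
   augmentation (sum of coefficients).  Hence [u, v] = aug(v) u - aug(u) v:
   commutators lie in the augmentation ideal I, [I, I] = 0, and [u, x_0] = u
   for u in I, so every u in I is a product of any number of elements of L and
   L^k = I for every k >= 2.  Telescoping shows that the x_i - x_(i+1) form a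
   basis of I.  For the Jordan product, u = 2 (u . x_0) - aug(u) (x_0 . x_0). *)

Section GeneratedSubalgebra.
Variables (R : comNzRingType) (mul : FM R -> FM R -> FM R).
Implicit Types (P S : FM R -> Prop) (f : FM R).

Lemma prods_closed P S : (forall a, S a -> P a) ->
  (forall a b, P a -> P b -> P (mul a b)) -> forall k f, prods mul S k f -> P f.
Proof. by move=> SP PM k f; elim=> [a /SP | i j a b _ Pa _ Pb]; last exact: PM. Qed.

Lemma prods_gt1 S k f : prods mul S k f -> (1 < k)%N ->
  exists i j a b, [/\ prods mul S i a, prods mul S j b & f = mul a b].
Proof. by case=> // i j a b Sa Sb _; exists i, j, a, b. Qed.

Lemma gen_closed P S : (forall a, S a -> P a) -> P 0 ->
  (forall a b, P a -> P b -> P (a + b)) -> (forall c a, P a -> P (c *: a)) ->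
  (forall a b, P a -> P b -> P (mul a b)) -> forall f, gen mul S f -> P f.
Proof.
move=> SP P0 PD PZ PM f; elim=> {f} [a /SP | | a b _ + _ | c a _ | a b _ + _] //.
- exact: PD.
- exact: PZ.
- exact: PM.
Qed.

End GeneratedSubalgebra.

Section Augmentation.
Variable R : comNzRingType.
Implicit Types f g : FM R.

Definition aug f : R := \sum_(k <- msupp f) f@_k.

Lemma augEw f (d : {fset nat}) : (msupp f `<=` d)%fset -> aug f = \sum_(k <- d) f@_k.
Proof.
by move=> le_fd; rewrite /aug (big_fset_incl _ le_fd) => // k _ /mcoeff_outdom.
Qed.

Lemma aug_is_scalar : scalar aug.
Proof.
move=> c f g; pose d := (msupp f `|` msupp g)%fset.
have le_d : (msupp (c *: f + g) `<=` d)%fset.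
  exact: fsubset_trans (msuppD_le _ _) (fsetSU _ (msuppZ_le _ _)).
rewrite (augEw le_d) (augEw (fsubsetUl _ _ : (msupp f `<=` d)%fset)).
rewrite (augEw (fsubsetUr _ _ : (msupp g `<=` d)%fset)) mulr_sumr -big_split /=.
by apply: eq_bigr => k _; rewrite mcoeffD mcoeffZ.
Qed.

HB.instance Definition _ := GRing.isLinear.Build R (FM R) R *%R aug aug_is_scalar.

Lemma augU i : aug << i >> = 1.
Proof. by rewrite /aug msuppU oner_eq0 big_seq_fset1 mcoeffUU. Qed.

Lemma malgEZ f : f = \sum_(k <- msupp f) f@_k *: << k >>.
Proof.
rewrite {1}(monalgE f); apply: eq_bigr => k _.
by apply/malgP => j; rewrite mcoeffZ !mcoeffU mulr_natr.
Qed.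

Lemma qmul_trivE f g : qmul triv_op f g = aug g *: f.
Proof.
rewrite /qmul {3}(malgEZ f) scaler_sumr; apply: eq_bigr => k _.
by rewrite /triv_op -scaler_suml scalerA -mulr_sumr mulrC.
Qed.

Lemma lie_mulE f g : lie_mul f g = aug g *: f - aug f *: g.
Proof. by rewrite /lie_mul !qmul_trivE. Qed.

Lemma jor_mulE h f g : jor_mul h f g = h *: (aug g *: f + aug f *: g).
Proof. by rewrite /jor_mul !qmul_trivE. Qed.

Lemma aug_lie_mul f g : aug (lie_mul f g) = 0.
Proof. by rewrite lie_mulE linearB !scalarZ mulrC subrr. Qed.

Lemma lie_mul_aug0 f g : aug f = 0 -> aug g = 0 -> lie_mul f g = 0.
Proof. by rewrite lie_mulE => -> ->; rewrite !scale0r subr0. Qed.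

Lemma lie_mul_aug01 f g : aug f = 0 -> aug g = 1 -> lie_mul f g = f.
Proof. by rewrite lie_mulE => -> ->; rewrite scale1r scale0r subr0. Qed.

Lemma jor_mul_aug1 h f g : h * 2%:R = 1 -> aug g = 1 ->
  f = 2%:R *: jor_mul h f g + (- aug f) *: jor_mul h g g.
Proof.
move=> h2 g1; have h2' : 2%:R * h = 1 by rewrite mulrC.
rewrite scaleNr !jor_mulE g1 !scale1r !scalerA h2' scale1r -mulr2n -scaler_nat scalerA.
by rewrite -mulrA h2 mulr1 addrK.
Qed.

Lemma lie_pow_aug0 S k f : (forall a, S a -> aug a = 0) -> (1 < k)%N ->
  alg_pow (@lie_mul R) S k f -> f = 0.
Proof.
move=> Saug k_gt1; apply: (gen_closed (P := eq^~ 0)) => //.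
- move=> a /prods_gt1/(_ k_gt1) [i [j [b [c [Sb Sc ->]]]]].
  have prods_aug := prods_closed Saug (fun u v _ _ => aug_lie_mul u v).
  exact: lie_mul_aug0 (prods_aug _ _ Sb) (prods_aug _ _ Sc).
- by move=> a b -> ->; rewrite addr0.
- by move=> c a ->; rewrite scaler0.
- by move=> a b -> ->; apply: lie_mul_aug0; rewrite linear0.
Qed.

Lemma diffb_telescope k : \sum_(0 <= i < k) diffb R i = << 0%N >> - << k >>.
Proof.
have := telescope_sumr (fun i => - << i >> : FM R) (leq0n k).
rewrite opprK addrC => <-; apply: eq_bigr => i _.
by rewrite opprK addrC.
Qed.

Lemma sum_seq_delta (s : seq nat) (c : nat -> R) k : uniq s ->
  \sum_(i <- s) c i * (i == k)%:R = if k \in s then c k else 0.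
Proof.
move=> s_uniq; case: ifP => [ks | /negbT kNs].
  rewrite (bigD1_seq k) //= eqxx mulr1 big1 ?addr0 // => i /negbTE ->.
  by rewrite mulr0.
rewrite big1_seq // => i /andP[_ si]; case: eqP => [ik | _]; last by rewrite mulr0.
by rewrite -ik si in kNs.
Qed.

Lemma diffb_free (s : seq nat) (c : nat -> R) : uniq s ->
  \sum_(i <- s) c i *: diffb R i = 0 -> forall i, i \in s -> c i = 0.
Proof.
move=> s_uniq sum0.
have coef k : \sum_(i <- s) c i * (i == k)%:R - \sum_(i <- s) c i * (i.+1 == k)%:R = 0.
  have := congr1 (mcoeff k) sum0; rewrite mcoeff0 raddf_sum => coef0.
  rewrite -[RHS]coef0 -sumrB; apply: eq_bigr => i _.
  by rewrite /= mcoeffZ mcoeffB !mcoeffU -mulrBr.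
elim=> [|k IHk] sk.
  by move: (coef 0%N); rewrite sum_seq_delta // sk big1 ?subr0 // => i _; rewrite mulr0.
move: (coef k.+1); under [X in _ - X]eq_bigr do rewrite eqSS.
rewrite !sum_seq_delta // sk; case: ifP => [/IHk -> | _]; by rewrite subr0.
Qed.

End Augmentation.

Section QuandleRing.
Variables (R : comNzRingType) (N : option nat).
Implicit Types f g : FM R.

Lemma Tset_le i j : (j <= i)%N -> Tset N i -> Tset N j.
Proof. by case: N => //= n le_ji lt_in; apply: leq_ltn_trans le_ji lt_in. Qed.

Lemma inA0 : inA N (0 : FM R).
Proof. by move=> k; rewrite msupp0 in_fset0. Qed.

Lemma inAD f g : inA N f -> inA N g -> inA N (f + g).
Proof.
by move=> Af Ag k /(fsubsetP (msuppD_le f g)); rewrite in_fsetU => /orP[/Af | /Ag].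
Qed.

Lemma inAZ c f : inA N f -> inA N (c *: f).
Proof. by move=> Af k /(fsubsetP (msuppZ_le c f)) /Af. Qed.

Lemma inAB f g : inA N f -> inA N g -> inA N (f - g).
Proof. by move=> Af Ag; rewrite -scaleN1r; apply/inAD/inAZ. Qed.

Lemma inAU i : Tset N i -> inA N (<< i >> : FM R).
Proof. by move=> Ti k; rewrite msuppU oner_eq0 in_fset1 => /eqP ->. Qed.

Lemma inA_lie f g : inA N f -> inA N g -> inA N (lie_mul f g).
Proof. by move=> Af Ag; rewrite lie_mulE; apply/inAB/inAZ/Ag/inAZ. Qed.

Lemma inA_jor h f g : inA N f -> inA N g -> inA N (jor_mul h f g).
Proof. by move=> Af Ag; rewrite jor_mulE; apply/inAZ/inAD/inAZ/Ag/inAZ. Qed.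

Definition inAug f : Prop := inA N f /\ aug f = 0.

Lemma lie_pow_inAug k f : (1 < k)%N -> alg_pow (@lie_mul R) (inA N) k f -> inAug f.
Proof.
move=> k_gt1; apply: gen_closed.
- move=> a /prods_gt1/(_ k_gt1) [i [j [b [c [Ab Ac ->]]]]].
  have prods_A := prods_closed (fun u (Au : inA N u) => Au) inA_lie.
  by split; [exact: inA_lie (prods_A _ _ Ab) (prods_A _ _ Ac) | exact: aug_lie_mul].
- by split; [exact: inA0 | exact: linear0].
- move=> a b [Aa auga] [Ab augb]; split; first exact: inAD.
  by rewrite linearD /= auga augb addr0.
- by move=> c a [Aa auga]; split; [exact: inAZ | rewrite scalarZ /= auga mulr0].
- by move=> a b [Aa _] [Ab _]; split; [exact: inA_lie | exact: aug_lie_mul].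
Qed.

Hypothesis T0 : Tset N 0.

Lemma inAug_prods_lie k f : (0 < k)%N -> inAug f -> prods (@lie_mul R) (inA N) k f.
Proof.
case: k => // k _ [Af augf]; elim: k => [|k IHk]; first exact: prods1.
rewrite -addn1 -(lie_mul_aug01 augf (augU R 0)).
exact: prodsM IHk (prods1 _ (inAU T0)).
Qed.

Lemma lie_powE k f : (1 < k)%N -> alg_pow (@lie_mul R) (inA N) k f <-> inAug f.
Proof.
move=> k_gt1; split; first exact: lie_pow_inAug.
by move=> Augf; apply/gen_in/inAug_prods_lie => //; apply: ltnW.
Qed.

Lemma jor_pow2E h f : h * 2%:R = 1 -> alg_pow (jor_mul h) (inA N) 2 f <-> inA N f.
Proof.
move=> h2; split.
  apply: gen_closed; [|exact: inA0|exact: inAD|exact: inAZ|exact: inA_jor].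
  exact: prods_closed (fun u (Au : inA N u) => Au) (@inA_jor h) 2%N.
move=> Af; have x0 := prods1 (jor_mul h) (inAU T0).
have Af1 := prods1 (jor_mul h) Af.
rewrite (jor_mul_aug1 f h2 (augU R 0)); apply: genD; apply: genZ; apply: gen_in.
- exact: (prodsM Af1 x0).
- exact: (prodsM x0 x0).
Qed.

Lemma diffb_inAug i : Tset N i.+1 -> inAug (diffb R i).
Proof.
move=> Ti; split; last by rewrite /diffb linearB /= !augU subrr.
by apply: inAB; apply: inAU => //; apply: Tset_le Ti.
Qed.

Lemma inAug_diffb_span f : inAug f -> exists (s : seq nat) (c : nat -> R),
  all (fun i => Tset N i.+1) s /\ f = \sum_(i <- s) c i *: diffb R i.
Proof.
case=> Af augf; pose m := (\max_(k <- msupp f) k)%N.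
have le_m k : k \in msupp f -> (k <= m)%N.
  by move=> fk; apply: (@leq_bigmax_seq _ _ xpredT (fun k => k) k fk).
have Tm : Tset N m.
  rewrite /m big_seq; apply: (big_ind (Tset N)) => //.
  by case: (N) => //= n i j; rewrite gtn_max => -> ->.
have tele k : (k <= m)%N ->
    \sum_(0 <= i < m) (i < k)%:R *: diffb R i = << 0%N >> - << k >>.
  move=> le_km; rewrite -diffb_telescope (big_nat_widen 0 k m xpredT _ le_km).
  rewrite [RHS]big_mkcond; apply: eq_bigr => i _.
  by case: ltnP; rewrite ?scale1r ?scale0r.
exists (index_iota 0 m), (fun i => \sum_(k <- msupp f) - f@_k * (i < k)%:R); split.
  by apply/allP => i; rewrite mem_index_iota => /andP[_ lt_im]; apply: Tset_le Tm.
under eq_bigr do rewrite scaler_suml.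
rewrite exchange_big /=.
have -> : \sum_(k <- msupp f) \sum_(0 <= i < m) (- f@_k * (i < k)%:R) *: diffb R i
    = \sum_(k <- msupp f) (- f@_k) *: (<< 0%N >> - << k >>).
  rewrite big_seq [RHS]big_seq; apply: eq_bigr => k fk.
  by rewrite -(tele k (le_m k fk)) scaler_sumr; apply: eq_bigr => i _; rewrite scalerA.
under eq_bigr do rewrite scaleNr -scalerN opprB scalerBr.
by rewrite sumrB -malgEZ -scaler_suml -/(aug f) augf scale0r subr0.
Qed.

End QuandleRing.

Unset Implicit Arguments.
Theorem theorem8p3 (R : comNzRingType) (N : option nat)
  (HT : if N is Some n then (1 < n)%N else true) :
  let A := @inA R N in
  let L := A in (* L = A^(-) has the same underlying module as A *)
  [/\ (* (1) L^2 = L^3, with basis {x_i - x_(i+1)}, hence rank n-1 if |T| = n *)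
      (forall f : FM R, alg_pow (@lie_mul R) L 2 f <-> alg_pow (@lie_mul R) L 3 f),
      is_basis (alg_pow (@lie_mul R) L 2) (fun i => Tset N i.+1) (@diffb R),
      (* (2) (L^2)^2 = 0 *)
      (forall f : FM R,
          alg_pow (@lie_mul R) (alg_pow (@lie_mul R) L 2) 2 f -> f = 0)
    & (* (3) if 1/2 in R, J = A^(+) satisfies J^2 = J *)
      (forall h : R, h * 2%:R = 1 ->
          forall f : FM R, alg_pow (jor_mul h) A 2 f <-> A f)].
Proof.
move=> A L; rewrite {}/L {}/A.
have T0 : Tset N 0 by case: N HT => // n /ltnW.
have L2 f := lie_powE T0 f (isT : (1 < 2)%N).
have L3 f := lie_powE T0 f (isT : (1 < 3)%N).
split.
- by move=> f; rewrite L2 L3.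
- split.
  + by move=> i /diffb_inAug/L2.
  + by move=> f /L2/(inAug_diffb_span T0).
  + by move=> s c s_uniq _; apply: diffb_free.
- by move=> f; apply: lie_pow_aug0 => // a /L2 [].
- by move=> h h2 f; apply: jor_pow2E.
Qed.
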